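(* Let $\ell,\beta,m,s>0$ and $d_{11},d_{22},d_{21},\xi\ge 0$, and consider the Holling–Tanner system with spatial memory and predator-taxis \[ \begin{aligned} u_t&=d_{11}u_{xx}+\xi\,(u\,v_x)_x+u(1-\beta u)-\frac{muv}{1+u},\\ v_t&=d_{22}v_{xx}-d_{21}\,\big(v(x,t)\,u_x(x,t-\tau)\big)_x+sv\Big(1-\frac{v}{u}\Big), \end{aligned}\qquad x\in(0,\ell\pi),\ t>0, \] with homogeneous Neumann boundary conditions $u_x=v_x=0$ at $x=0,\ell\pi$ and memory delay $\tau\ge0$. Let $E_*=(u_*,v_* )$, the quantities $a_{ij}$, $T_n$, $J_n$, $K_n$, $P_n$, $Q_n$, $n_1,n_2$, $\omega_n$, $\tau_{n,j}$ be as defined in the context. Suppose that $d_{11}d_{22}-d_{21}\xi u_*v_*>0$, that condition $a_{11}<0$ holds, and that \[ \operatorname{Det}(A)>0,\quad \widetilde A_1>0,\quad \widetilde A_1^2-4\widetilde A_2\operatorname{Det}(A)>0 . \] Let $n\in\mathbb{N}$ with $n_1<n<n_2$ and $j\in\mathbb{N}_0$, and let $\lambda(\tau)$ be the root of the characteristic equation \[ \lambda^2-T_n\lambda+\widetilde J_n(\tau)=0,\qquad \widetilde J_n(\tau)=\big(d_{11}d_{22}+d_{21}\xi u_*v_*e^{-\lambda\tau}\big)\frac{n^4}{\ell^4}-\big(d_{11}a_{22}+d_{22}a_{11}-a_{21}\xi u_*+d_{21}v_*a_{12}e^{-\lambda\tau}\big)\frac{n^2}{\ell^2}+\operatorname{Det}(A),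 \] depending smoothly on $\tau$ near $\tau_{n,j}$ with $\lambda(\tau_{n,j})=i\omega_n$. Then \[ \left.\frac{d\,\operatorname{Re}\lambda(\tau)}{d\tau}\right|_{\tau=\tau_{n,j}}>0 . \]
   Context: Definitions: $u_*=v_*=\frac{1}{2\beta}\big(\sqrt{R^2+4\beta}-R\big)$ with $R=\beta+m-1$ (the positive constant steady state). $a_{11}=1-2\beta u_*-\frac{mu_*}{(1+u_* )^2}$, $a_{12}=-\frac{mu_*}{1+u_*}$, $a_{21}=s$, $a_{22}=-s$; $A=(a_{ij})$, $\operatorname{Det}(A)=a_{11}a_{22}-a_{12}a_{21}$. For $n\in\mathbb{N}_0$: $T_n=a_{11}+a_{22}-(d_{11}+d_{22})\frac{n^2}{\ell^2}$; $J_n=d_{11}d_{22}\frac{n^4}{\ell^4}-(d_{11}a_{22}+d_{22}a_{11}-a_{21}\xi u_* )\frac{n^2}{\ell^2}+\operatorname{Det}(A)$; $K_n=d_{21}\xi u_*v_*\frac{n^4}{\ell^4}-d_{21}v_*a_{12}\frac{n^2}{\ell^2}$; $P_n=T_n^2-2J_n$; $Q_n=(J_n+K_n)(J_n-K_n)$. Further $\widetilde A_1=d_{11}a_{22}+d_{22}a_{11}-a_{21}\xi u_*-d_{21}v_*a_{12}$, $\widetilde A_2=d_{11}d_{22}-d_{21}\xi u_*v_*$, $\widetilde A_3=\widetilde A_1^2-4\widetilde A_2\operatorname{Det}(A)$, $\widetilde x_{1,2}=\frac{\widetilde A_1\mp\sqrt{\widetilde A_3}}{2\widetilde A_2}$,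 $n_1=\ell\sqrt{\widetilde x_1}$, $n_2=\ell\sqrt{\widetilde x_2}$. For $n_1<n<n_2$: $\omega_n=\sqrt{\frac{-P_n+\sqrt{P_n^2-4Q_n}}{2}}$ and $\tau_{n,j}=\frac{1}{\omega_n}\Big(\arccos\frac{\omega_n^2-J_n}{K_n}+2j\pi\Big)$, $j\in\mathbb{N}_0$. *)

From Stdlib Require Import Reals.
From Coquelicot Require Import Coquelicot.
Open Scope R_scope.

Definition cexp (z : C) : C :=
  (exp (Re z) * cos (Im z), exp (Re z) * sin (Im z)).

Section HT.
Variables (ell beta m s d11 d22 d21 xi : R).

Definition Rr : R := beta + m - 1.
Definition ustar : R := (sqrt (Rr ^ 2 + 4 * beta) - Rr) / (2 * beta).
Definition vstar : R := ustar.

Definition a11 : R := 1 - 2 * beta * ustar - m * ustar / (1 + ustar) ^ 2.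
Definition a12 : R := - (m * ustar / (1 + ustar)).
Definition a21 : R := s.
Definition a22 : R := - s.
Definition DetA : R := a11 * a22 - a12 * a21.

Definition T_ (n : nat) : R := a11 + a22 - (d11 + d22) * (INR n ^ 2 / ell ^ 2).
Definition J_ (n : nat) : R :=
  d11 * d22 * (INR n ^ 4 / ell ^ 4)
  - (d11 * a22 + d22 * a11 - a21 * xi * ustar) * (INR n ^ 2 / ell ^ 2) + DetA.
Definition K_ (n : nat) : R :=
  d21 * xi * ustar * vstar * (INR n ^ 4 / ell ^ 4)
  - d21 * vstar * a12 * (INR n ^ 2 / ell ^ 2).
Definition P_ (n : nat) : R := T_ n ^ 2 - 2 * J_ n.
Definition Q_ (n : nat) : R := (J_ n + K_ n) * (J_ n - K_ n).

Definition At1 : R := d11 * a22 + d22 * a11 - a21 * xi * ustar - d21 * vstar * a12.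
Definition At2 : R := d11 * d22 - d21 * xi * ustar * vstar.
Definition At3 : R := At1 ^ 2 - 4 * At2 * DetA.
Definition xt1 : R := (At1 - sqrt At3) / (2 * At2).
Definition xt2 : R := (At1 + sqrt At3) / (2 * At2).
Definition n1 : R := ell * sqrt xt1.
Definition n2 : R := ell * sqrt xt2.

Definition omega_ (n : nat) : R :=
  sqrt ((- P_ n + sqrt (P_ n ^ 2 - 4 * Q_ n)) / 2).
Definition tau_ (n j : nat) : R :=
  / omega_ n * (acos ((omega_ n ^ 2 - J_ n) / K_ n) + 2 * INR j * PI).

Definition Jt_ (n : nat) (lam : C) (tau : R) : C :=
  (RtoC (d11 * d22) + RtoC (d21 * xi * ustar * vstar) * cexp (- lam * RtoC tau))
    * RtoC (INR n ^ 4 / ell ^ 4)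
  - (RtoC (d11 * a22 + d22 * a11 - a21 * xi * ustar)
     + RtoC (d21 * vstar * a12) * cexp (- lam * RtoC tau)) * RtoC (INR n ^ 2 / ell ^ 2)
  + RtoC DetA.

Definition charF (n : nat) (lam : C) (tau : R) : C :=
  lam * lam - RtoC (T_ n) * lam + Jt_ n lam tau.
End HT.

From Stdlib Require Import Reals Lra.
From Coquelicot Require Import Coquelicot.
Open Scope R_scope.

(* Write λ = X + iY.  Differentiating the real and imaginary parts of
   λ² − T λ + J + K e^{−λτ} = 0 at τ₀, where X = 0 and Y = ω, gives a linear
   system for (X', Y') with matrix [[a, −b], [b, a]]; Cramer's rule yields
   X'(τ₀) (a² + b²) = ω² (T² + 2ω² − 2J) = ω² √(P² − 4Q).  The sign is thus
   independent of τ₀, hence of j, and positive as soon as Q < 0, which follows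
   from J + K > 0 and J − K = Ã₂ x² − Ã₁ x + Det(A) < 0 for x = n²/ℓ² strictly
   between the roots x̃₁ < x̃₂. *)

Section Crossing.

Variables T J K : R.

Definition char_re (x y t : R) : R :=
  x * x - y * y - T * x + J + K * exp (- (x * t)) * cos (- (y * t)).

Definition char_im (x y t : R) : R :=
  2 * x * y - T * y + K * exp (- (x * t)) * sin (- (y * t)).

Lemma is_derive_locally_zero (f : R -> R) (t0 delta : R) :
  0 < delta -> (forall t, Rabs (t - t0) < delta -> f t = 0) -> is_derive f t0 0.
Proof.
  intros Hdelta Hf.
  apply (is_derive_ext_loc (fun _ => 0)).
  - exists (mkposreal delta Hdelta). intros t Ht. symmetry. now apply Hf.
  - exact (is_derive_const (K := R_AbsRing) (V := R_NormedModule) 0 t0).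
Qed.

Lemma char_root_derivative_equations (X Y : R -> R) (t0 w delta : R) :
  0 < delta ->
  (forall t, Rabs (t - t0) < delta ->
     char_re (X t) (Y t) t = 0 /\ char_im (X t) (Y t) t = 0) ->
  ex_derive X t0 -> ex_derive Y t0 -> X t0 = 0 -> Y t0 = w ->
  let p := Derive X t0 in let q := Derive Y t0 in
  let c := cos (w * t0) in let sn := sin (w * t0) in
  - w * w + J + K * c = 0 /\ - T * w - K * sn = 0 /\
  - 2 * w * q - T * p - K * t0 * p * c - K * sn * (q * t0 + w) = 0 /\
  2 * w * p - T * q + K * t0 * p * sn - K * c * (q * t0 + w) = 0.
Proof.
  intros Hdelta Hroot HdX HdY HX HY p q c sn.
  assert (Ht0 : Rabs (t0 - t0) < delta) by (rewrite Rminus_diag, Rabs_R0; lra).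
  assert (Hexp : exp (- (X t0 * t0)) = 1) by (rewrite HX, Rmult_0_l, Ropp_0; apply exp_0).
  destruct (Hroot t0 Ht0) as [Hre Him].
  unfold char_re, char_im in Hre, Him.
  rewrite Hexp, HX, HY, cos_neg in Hre; rewrite Hexp, HX, HY, sin_neg in Him.
  assert (Dre : is_derive (fun t => char_re (X t) (Y t) t) t0
                  (- 2 * w * q - T * p - K * t0 * p * c - K * sn * (q * t0 + w))).
  { unfold char_re. auto_derive; [now repeat split|].
    rewrite Hexp, HX, HY, ?cos_neg, ?sin_neg. fold c sn.
    change (Derive (fun x => X x) t0) with p; change (Derive (fun x => Y x) t0) with q.
    ring. }
  assert (Dim : is_derive (fun t => char_im (X t) (Y t) t) t0
                  (2 * w * p - T * q + K * t0 * p * sn - K * c * (q * t0 + w))).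
  { unfold char_im. auto_derive; [now repeat split|].
    rewrite Hexp, HX, HY, ?cos_neg, ?sin_neg. fold c sn.
    change (Derive (fun x => X x) t0) with p; change (Derive (fun x => Y x) t0) with q.
    ring. }
  assert (Zre : is_derive (fun t => char_re (X t) (Y t) t) t0 0).
  { apply (is_derive_locally_zero _ _ delta Hdelta). intros t Ht. apply (Hroot t Ht). }
  assert (Zim : is_derive (fun t => char_im (X t) (Y t) t) t0 0).
  { apply (is_derive_locally_zero _ _ delta Hdelta). intros t Ht. apply (Hroot t Ht). }
  apply is_derive_unique in Dre, Dim, Zre, Zim.
  fold c sn in Hre, Him.
  repeat split; lra.
Qed.

Lemma crossing_speed_identity (w t0 p q c sn : R) :
  - w * w + J + K * c = 0 -> - T * w - K * sn = 0 ->
  - 2 * w * q - T * p - K * t0 * p * c - K * sn * (q * t0 + w) = 0 ->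
  2 * w * p - T * q + K * t0 * p * sn - K * c * (q * t0 + w) = 0 ->
  p * ((- T - t0 * (w * w - J)) ^ 2 + (2 * w - T * w * t0) ^ 2)
  = w * w * (T * T + 2 * (w * w) - 2 * J).
Proof.
  intros G1 G2 E1 E2.
  set (a := - T - t0 * (w * w - J)); set (b := 2 * w - T * w * t0).
  assert (Hc : K * c = w * w - J) by lra.
  assert (Hs : K * sn = - T * w) by lra.
  assert (Lre : a * p - b * q = - T * (w * w)).
  { pose proof (f_equal (Rmult (t0 * p)) Hc). pose proof (f_equal (Rmult (q * t0 + w)) Hs).
    unfold a, b. lra. }
  assert (Lim : b * p + a * q = (w * w - J) * w).
  { pose proof (f_equal (Rmult (t0 * p)) Hs). pose proof (f_equal (Rmult (q * t0 + w)) Hc).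
    unfold a, b. lra. }
  pose proof (f_equal (Rmult a) Lre). pose proof (f_equal (Rmult b) Lim).
  unfold a, b in *. lra.
Qed.

Lemma char_root_crossing_direction (X Y : R -> R) (t0 w delta : R) :
  0 < delta ->
  (forall t, Rabs (t - t0) < delta ->
     char_re (X t) (Y t) t = 0 /\ char_im (X t) (Y t) t = 0) ->
  ex_derive X t0 -> ex_derive Y t0 -> X t0 = 0 -> Y t0 = w ->
  w <> 0 -> 0 < T * T + 2 * (w * w) - 2 * J ->
  0 < Derive X t0.
Proof.
  intros Hdelta Hroot HdX HdY HX HY Hw Htrans.
  destruct (char_root_derivative_equations X Y t0 w delta Hdelta Hroot HdX HdY HX HY)
    as (G1 & G2 & E1 & E2).
  pose proof (crossing_speed_identity _ _ _ _ _ _ G1 G2 E1 E2) as Hid.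
  assert (Hw2 : 0 < w * w) by (apply Rsqr_pos_lt; exact Hw).
  pose proof (pow2_ge_0 (- T - t0 * (w * w - J))).
  pose proof (pow2_ge_0 (2 * w - T * w * t0)).
  nra.
Qed.

End Crossing.

Lemma quadratic_neg_between_roots (a b c x : R) :
  0 < a -> 0 < b ^ 2 - 4 * a * c ->
  (b - sqrt (b ^ 2 - 4 * a * c)) / (2 * a) < x ->
  x < (b + sqrt (b ^ 2 - 4 * a * c)) / (2 * a) ->
  a * x ^ 2 - b * x + c < 0.
Proof.
  intros Ha Hdisc Hlo Hhi.
  set (r := sqrt (b ^ 2 - 4 * a * c)) in *.
  assert (Hrr : r * r = b ^ 2 - 4 * a * c) by (apply sqrt_sqrt; lra).
  assert (Hfact : a * x ^ 2 - b * x + c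
                  = a * (x - (b - r) / (2 * a)) * (x - (b + r) / (2 * a))).
  { field_simplify; [|lra]. replace (r ^ 2) with (r * r) by ring. rewrite Hrr. field. lra. }
  rewrite Hfact.
  assert (0 < a * (x - (b - r) / (2 * a))) by (apply Rmult_lt_0_compat; lra).
  assert (x - (b + r) / (2 * a) < 0) by lra.
  nra.
Qed.

Lemma sqr_div_gt_of_mul_sqrt_lt (l a y : R) :
  0 < l -> l * sqrt a < y -> a < (y / l) ^ 2.
Proof.
  intros Hl H.
  assert (Hy : sqrt a < y / l).
  { apply (Rmult_lt_reg_l l); [exact Hl|]. field_simplify; lra. }
  assert (0 <= y / l) by (pose proof (sqrt_pos a); lra).
  apply sqrt_lt_0_alt. rewrite sqrt_pow2; assumption.
Qed.

Lemma sqr_div_lt_of_lt_mul_sqrt (l b y : R) :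
  0 < l -> 0 <= y -> y < l * sqrt b -> (y / l) ^ 2 < b.
Proof.
  intros Hl Hy H.
  assert (Hyb : y / l < sqrt b).
  { apply (Rmult_lt_reg_l l); [exact Hl|]. field_simplify; lra. }
  apply sqrt_lt_0_alt. rewrite sqrt_pow2; [exact Hyb|].
  apply Rdiv_le_0_compat; lra.
Qed.

Lemma monic_quadratic_larger_root_pos (P Q : R) :
  Q < 0 -> 0 < (- P + sqrt (P ^ 2 - 4 * Q)) / 2.
Proof.
  intros HQ.
  pose proof (sqrt_pos (P ^ 2 - 4 * Q)).
  assert (Hrr : sqrt (P ^ 2 - 4 * Q) * sqrt (P ^ 2 - 4 * Q) = P ^ 2 - 4 * Q)
    by (apply sqrt_sqrt; nra).
  nra.
Qed.

Lemma cexp_opp_scal (lam : C) (t : R) :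
  cexp (- lam * RtoC t)
  = (exp (- (Re lam * t)) * cos (- (Im lam * t)), exp (- (Re lam * t)) * sin (- (Im lam * t))).
Proof.
  unfold cexp. destruct lam as [x y]. simpl.
  replace (- x * t - - y * 0) with (- (x * t)) by ring.
  replace (- x * 0 + - y * t) with (- (y * t)) by ring.
  reflexivity.
Qed.

Section HollingTanner.

Variables ell beta m s d11 d22 d21 xi : R.

Local Notation u := (ustar beta m).
Local Notation T n := (T_ ell beta m s d11 d22 n).
Local Notation J n := (J_ ell beta m s d11 d22 xi n).
Local Notation K n := (K_ ell beta m d21 xi n).
Local Notation omega n := (omega_ ell beta m s d11 d22 d21 xi n).

Definition neumann_eig (n : nat) : R := INR n ^ 2 / ell ^ 2.

Lemma Re_charF n lam t :
  Re (charF ell beta m s d11 d22 d21 xi n lam t)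
  = char_re (T n) (J n) (K n) (Re lam) (Im lam) t.
Proof.
  unfold charF, Jt_. rewrite cexp_opp_scal.
  destruct lam as [x y]. unfold char_re, T_, J_, K_. simpl. ring.
Qed.

Lemma Im_charF n lam t :
  Im (charF ell beta m s d11 d22 d21 xi n lam t)
  = char_im (T n) (K n) (Re lam) (Im lam) t.
Proof.
  unfold charF, Jt_. rewrite cexp_opp_scal.
  destruct lam as [x y]. unfold char_im, T_, J_, K_. simpl. ring.
Qed.

Local Notation P n := (P_ ell beta m s d11 d22 xi n).
Local Notation Q n := (Q_ ell beta m s d11 d22 d21 xi n).

Lemma omega_sq n : Q n < 0 -> omega n * omega n = (- P n + sqrt (P n ^ 2 - 4 * Q n)) / 2.
Proof. intros HQ. apply sqrt_sqrt, Rlt_le, monic_quadratic_larger_root_pos, HQ. Qed.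

Lemma omega_pos n : Q n < 0 -> 0 < omega n.
Proof. intros HQ. apply sqrt_lt_R0, monic_quadratic_larger_root_pos, HQ. Qed.

Lemma crossing_transversal n : Q n < 0 -> 0 < T n * T n + 2 * (omega n * omega n) - 2 * J n.
Proof.
  intros HQ. rewrite (omega_sq n HQ).
  assert (0 < sqrt (P n ^ 2 - 4 * Q n)) by (apply sqrt_lt_R0; nra).
  unfold P_ in *. lra.
Qed.

Hypothesis Hbeta : 0 < beta.

Lemma ustar_pos : 0 < u.
Proof.
  unfold ustar. set (r := Rr beta m).
  assert (Hr : r < sqrt (r ^ 2 + 4 * beta)).
  { destruct (Rle_or_lt r 0) as [Hr | Hr].
    - assert (0 < sqrt (r ^ 2 + 4 * beta)) by (apply sqrt_lt_R0; nra). lra.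
    - rewrite <- (sqrt_pow2 r) at 1 by lra. apply sqrt_lt_1; nra. }
  apply Rdiv_lt_0_compat; lra.
Qed.

Hypotheses (Hell : 0 < ell) (Hm : 0 < m) (Hs : 0 < s).
Hypotheses (Hd11 : 0 <= d11) (Hd22 : 0 <= d22) (Hd21 : 0 <= d21) (Hxi : 0 <= xi).
Hypotheses (Ha11 : a11 beta m < 0) (HDet : DetA beta m s > 0).

Lemma neumann_eig_ge0 n : 0 <= neumann_eig n.
Proof.
  unfold neumann_eig. apply Rdiv_le_0_compat; [apply pow2_ge_0 | apply pow_lt; exact Hell].
Qed.

Lemma J_sub_K n :
  J n - K n = At2 beta m d11 d22 d21 xi * neumann_eig n ^ 2
              - At1 beta m s d11 d22 d21 xi * neumann_eig n + DetA beta m s.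
Proof.
  unfold J_, K_, At1, At2, neumann_eig, vstar.
  replace (INR n ^ 4 / ell ^ 4) with ((INR n ^ 2 / ell ^ 2) ^ 2) by (field; lra).
  ring.
Qed.

Lemma J_add_K_pos n : 0 < J n + K n.
Proof.
  pose proof ustar_pos as Hu. pose proof (neumann_eig_ge0 n) as Hk.
  set (k := neumann_eig n) in *.
  assert (Hmu : 0 <= m * u / (1 + u)) by (apply Rdiv_le_0_compat; nra).
  assert (E : J n + K n
              = (d11 * d22 + d21 * xi * u * u) * k ^ 2
                + (d11 * s - d22 * a11 beta m + s * xi * u + d21 * u * (m * u / (1 + u))) * k
                + DetA beta m s).
  { unfold J_, K_, a22, a21, a12, k, neumann_eig, vstar.
    replace (INR n ^ 4 / ell ^ 4) with ((INR n ^ 2 / ell ^ 2) ^ 2) by (field; lra).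
    ring. }
  assert (0 <= d11 * d22 + d21 * xi * u * u).
  { assert (0 <= d21 * xi) by (apply Rmult_le_pos; lra). nra. }
  assert (0 <= d11 * s - d22 * a11 beta m + s * xi * u + d21 * u * (m * u / (1 + u))).
  { assert (0 <= d11 * s) by nra. assert (0 <= - d22 * a11 beta m) by nra.
    assert (0 <= s * xi * u) by (apply Rmult_le_pos; nra).
    assert (0 <= d21 * u * (m * u / (1 + u))) by (apply Rmult_le_pos; nra).
    lra. }
  rewrite E. nra.
Qed.

Hypotheses (HA2 : 0 < At2 beta m d11 d22 d21 xi) (HA3 : 0 < At3 beta m s d11 d22 d21 xi).

Lemma neumann_eig_between_roots n :
  n1 ell beta m s d11 d22 d21 xi < INR n -> INR n < n2 ell beta m s d11 d22 d21 xi ->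
  xt1 beta m s d11 d22 d21 xi < neumann_eig n < xt2 beta m s d11 d22 d21 xi.
Proof.
  intros Hn1 Hn2. unfold neumann_eig.
  replace (INR n ^ 2 / ell ^ 2) with ((INR n / ell) ^ 2) by (field; lra).
  split.
  - exact (sqr_div_gt_of_mul_sqrt_lt _ _ _ Hell Hn1).
  - exact (sqr_div_lt_of_lt_mul_sqrt _ _ _ Hell (pos_INR n) Hn2).
Qed.

Lemma J_sub_K_neg n :
  n1 ell beta m s d11 d22 d21 xi < INR n -> INR n < n2 ell beta m s d11 d22 d21 xi ->
  J n - K n < 0.
Proof.
  intros Hn1 Hn2. rewrite J_sub_K.
  destruct (neumann_eig_between_roots n Hn1 Hn2) as [Hlo Hhi].
  apply quadratic_neg_between_roots; assumption.
Qed.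

Lemma Q_neg n :
  n1 ell beta m s d11 d22 d21 xi < INR n -> INR n < n2 ell beta m s d11 d22 d21 xi ->
  Q n < 0.
Proof.
  intros Hn1 Hn2. unfold Q_.
  pose proof (J_add_K_pos n). pose proof (J_sub_K_neg n Hn1 Hn2).
  nra.
Qed.

End HollingTanner.

Theorem lemma4p3
  (ell beta m s d11 d22 d21 xi : R)
  (Hell : 0 < ell) (Hbeta : 0 < beta) (Hm : 0 < m) (Hs : 0 < s)
  (Hd11 : 0 <= d11) (Hd22 : 0 <= d22) (Hd21 : 0 <= d21) (Hxi : 0 <= xi)
  (HA2 : d11 * d22 - d21 * xi * ustar beta m * vstar beta m > 0)
  (Ha11 : a11 beta m < 0)
  (HDet : DetA beta m s > 0)
  (HA1 : At1 beta m s d11 d22 d21 xi > 0)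
  (HA3 : At1 beta m s d11 d22 d21 xi ^ 2
         - 4 * At2 beta m d11 d22 d21 xi * DetA beta m s > 0)
  (n j : nat)
  (Hn1 : n1 ell beta m s d11 d22 d21 xi < INR n)
  (Hn2 : INR n < n2 ell beta m s d11 d22 d21 xi)
  (lam : R -> C) (delta : R) (Hdelta : 0 < delta) :
  let tau0 := tau_ ell beta m s d11 d22 d21 xi n j in
  (forall tau, Rabs (tau - tau0) < delta ->
     charF ell beta m s d11 d22 d21 xi n (lam tau) tau = 0%C
     /\ ex_derive (fun t => Re (lam t)) tau
     /\ ex_derive (fun t => Im (lam t)) tau) ->
  lam tau0 = (0, omega_ ell beta m s d11 d22 d21 xi n) ->
  Derive (fun t => Re (lam t)) tau0 > 0.
Proof.
  intros tau0 Hroot Hlam0.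
  set (w := omega_ ell beta m s d11 d22 d21 xi n).
  assert (HQ : Q_ ell beta m s d11 d22 d21 xi n < 0) by (apply Q_neg; assumption).
  assert (Ht0 : Rabs (tau0 - tau0) < delta) by (rewrite Rminus_diag, Rabs_R0; exact Hdelta).
  apply (char_root_crossing_direction (T_ ell beta m s d11 d22 n)
           (J_ ell beta m s d11 d22 xi n) (K_ ell beta m d21 xi n)
           (fun t => Re (lam t)) (fun t => Im (lam t)) tau0 w delta Hdelta).
  - intros t Ht. destruct (Hroot t Ht) as [Hchar _].
    rewrite <- Re_charF, <- Im_charF, Hchar. split; reflexivity.
  - apply (Hroot tau0 Ht0).
  - apply (Hroot tau0 Ht0).
  - rewrite Hlam0. reflexivity.
  - rewrite Hlam0. reflexivity.
  - apply Rgt_not_eq, omega_pos, HQ.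
  - apply crossing_transversal, HQ.
Qed.
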